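(* The integral subgroup $U$ equals its subgroup $U^1$.
   Context: For $f\in\mathbb{Q}[t,t^{-1}]$ let $\overline{f}(t)=f(t^{-1})$, and $\Phi=1+t^{-1}+t$. $\mathrm{PGL}(2,\mathbb{Q}[t,t^{-1}])$ is $\mathrm{GL}(2,\mathbb{Q}[t,t^{-1}])$ modulo unit scalar matrices, and $\mathrm{PGL}(2,\mathbb{Z}[t,t^{-1}])$ is the image of $\mathrm{GL}(2,\mathbb{Z}[t,t^{-1}])$ in it. The quaternionic group $\mathcal{Q}$ is the set of elements of $\mathrm{PGL}(2,\mathbb{Q}[t,t^{-1}])$ having a representative $\begin{pmatrix}g_1&g_2\\-\Phi\overline{g_2}&\overline{g_1}\end{pmatrix}$ with $g_1,g_2\in\mathbb{Q}[t,t^{-1}]$; the integral subgroup is $U=\mathcal{Q}\cap\mathrm{PGL}(2,\mathbb{Z}[t,t^{-1}])$, and $U^1$ is the subgroup of elements of $U$ having a representative $B$ with $\det B=1$. *)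

From HB Require Import structures.
From mathcomp Require Import all_boot all_order all_algebra.
Set Implicit Arguments. Unset Strict Implicit. Unset Printing Implicit Defensive.
Import Order.TTheory GRing.Theory Num.Theory.
Local Open Scope ring_scope.
Local Open Scope quotient_scope.

(* Ambient field: Q(t) = {fraction {poly rat}}.  The Laurent polynomial rings
   Q[t,t^-1] and Z[t,t^-1] are realised as subrings of Q(t), and
   GL(2, -), PGL(2, -) via 2x2 matrices over Q(t). *)
Definition QT := {fraction {poly rat}}.

Definition tvar : QT := tofrac 'X.

Definition laurentQ (f : QT) : Prop :=
  exists (p : {poly rat}) (k : nat), f = tofrac p / tvar ^+ k.

Definition laurentZ (f : QT) : Prop :=
  exists (p : {poly int}) (k : nat),
    f = tofrac (map_poly (fun z : int => z%:~R) p) / tvar ^+ k.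

Definition unitQ (u : QT) : Prop :=
  exists (c : rat) (n : int), c != 0 /\ u = tofrac (c%:P) * tvar ^ n.

Definition unitZ (u : QT) : Prop :=
  exists (b : bool) (n : int), u = (-1) ^+ b * tvar ^ n.

(* the involution f(t) |-> f(t^-1) of Q(t) (restricting to the bar of the
   paper on Q[t,t^-1]) : substitute t^-1 in numerator and denominator *)
Definition subst_inv (p : {poly rat}) : QT :=
  (map_poly (fun c : rat => tofrac (c%:P) : QT) p).[tvar^-1].
Definition bar (f : QT) : QT :=
  subst_inv (\n_(repr f)) / subst_inv (\d_(repr f)).

Definition Phi : QT := 1 + tvar^-1 + tvar.

Definition GL2Q (A : 'M[QT]_2) : Prop :=
  (forall i j, laurentQ (A i j)) /\ unitQ (\det A).
Definition GL2Z (A : 'M[QT]_2) : Prop :=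
  (forall i j, laurentZ (A i j)) /\ unitZ (\det A).

(* Elements of PGL(2,Q[t,t^-1]) are represented by A in GL2Q; two
   representatives define the same element iff they differ by a unit scalar. *)
Definition quat_mx (g1 g2 : QT) : 'M[QT]_2 :=
  \matrix_(i < 2, j < 2)
    if i == 0 then (if j == 0 then g1 else g2)
    else (if j == 0 then - (Phi * bar g2) else bar g1).

Definition in_quat (A : 'M[QT]_2) : Prop :=
  exists u g1 g2, [/\ unitQ u, laurentQ g1, laurentQ g2 & u *: A = quat_mx g1 g2].

Definition in_PGLZ (A : 'M[QT]_2) : Prop :=
  exists u, unitQ u /\ GL2Z (u *: A).

Definition in_U (A : 'M[QT]_2) : Prop := in_quat A /\ in_PGLZ A.

Definition in_U1 (A : 'M[QT]_2) : Prop :=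
  in_U A /\ exists u, unitQ u /\ \det (u *: A) = 1.

(* The determinant of a quaternionic matrix is the norm g1 * bar g1 + Phi * g2 * bar g2,
   which is fixed by the involution bar; a unit c t^k of Q[t,t^-1] is bar-fixed only for
   k = 0.  So if u A is quaternionic, det (u A) is a rational constant c, and clearing
   denominators by a power of t and evaluating at t = 1 gives c = g1(1)^2 + 3 g2(1)^2 >= 0.
   Writing det A = e t^l, this forces e > 0.  An integral representative v A = b t^j A has
   determinant b^2 e t^(2j+l) = +-t^n, so b^2 e = 1 and b t^i A has determinant 1. *)

From HB Require Import structures.
From mathcomp Require Import all_boot all_order all_algebra.
From mathcomp Require Import ring zify.
Set Implicit Arguments. Unset Strict Implicit. Unset Printing Implicit Defensive.
Import Order.TTheory GRing.Theory Num.Theory.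
Local Open Scope ring_scope.
Local Open Scope quotient_scope.

Definition revp (R : nzRingType) (m : nat) (p : {poly R}) : {poly R} :=
  \poly_(i < m.+1) p`_(m - i).

Lemma coef_revp (R : nzRingType) m (p : {poly R}) i :
  (revp m p)`_i = if (i <= m)%N then p`_(m - i) else 0.
Proof. exact: coef_poly. Qed.

Lemma revpK (R : nzRingType) m (p : {poly R}) :
  (size p <= m.+1)%N -> revp m (revp m p) = p.
Proof.
move=> le_p_m; apply/polyP => i; rewrite !coef_revp.
case: leqP => [le_i_m | lt_m_i]; last by rewrite nth_default ?(leq_trans le_p_m).
by rewrite leq_subr subKn.
Qed.

Lemma revp_eq0 (R : nzRingType) m (p : {poly R}) :
  (size p <= m.+1)%N -> (revp m p == 0) = (p == 0).
Proof.
have revp0 : revp m (0 : {poly R}) = 0.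
  by apply/polyP => i; rewrite coef_revp !coef0 if_same.
move=> le_p_m; apply/eqP/eqP => [p0 | ->] //.
by rewrite -(revpK le_p_m) p0.
Qed.

Lemma map_revp (R S : nzRingType) (f : {rmorphism R -> S}) m (p : {poly R}) :
  map_poly f (revp m p) = revp m (map_poly f p).
Proof.
by apply/polyP => i; rewrite coef_map !coef_revp coef_map; case: ifP => _; rewrite ?raddf0.
Qed.

Lemma horner_revp (F : fieldType) m (p : {poly F}) x :
  (size p <= m.+1)%N -> x != 0 -> (revp m p).[x] = x ^+ m * p.[x^-1].
Proof.
move=> le_p_m x0; rewrite (horner_coef_wide _ (size_poly _ _)) (horner_coef_wide _ le_p_m).
rewrite mulr_sumr (reindex_inj rev_ord_inj); apply: eq_bigr => i _ /=.
have le_i_m : (i <= m)%N by rewrite -ltnS.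
rewrite coef_revp subSS leq_subr subKn // expfB_cond ?(negPf x0) //.
by rewrite exprVn mulrCA.
Qed.


Definition ratQT (c : rat) : QT := tofrac c%:P.
HB.instance Definition _ := GRing.RMorphism.copy ratQT (@tofrac {poly rat} \o polyC).

Lemma tvar_neq0 : tvar != 0.
Proof. by rewrite tofrac_eq0 polyX_eq0. Qed.

Lemma tofrac_horner (q : {poly rat}) : tofrac q = (map_poly ratQT q).[tvar].
Proof. by rewrite -[in LHS](comp_polyXr q) -horner_map map_poly_comp. Qed.

Lemma ratQT_commr : commr_rmorph ratQT tvar^-1.
Proof. by move=> c; apply: mulrC. Qed.

HB.instance Definition _ :=
  GRing.RMorphism.copy subst_inv (horner_morph ratQT_commr).

Lemma subst_invC c : subst_inv c%:P = ratQT c.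
Proof. exact: (horner_morphC ratQT_commr). Qed.

Lemma subst_invX : subst_inv 'X = tvar^-1.
Proof. exact: (horner_morphX ratQT_commr). Qed.

Lemma subst_inv_revp m (p : {poly rat}) :
  (size p <= m.+1)%N -> subst_inv p * tvar ^+ m = tofrac (revp m p).
Proof.
move=> le_p_m; rewrite tofrac_horner map_revp horner_revp ?size_map_poly ?tvar_neq0 //.
by rewrite mulrC.
Qed.

Lemma subst_inv_eq0 (p : {poly rat}) : (subst_inv p == 0) = (p == 0).
Proof.
have := mulf_eq0 (subst_inv p) (tvar ^+ size p).
rewrite subst_inv_revp // tofrac_eq0 revp_eq0 //.
by rewrite expf_eq0 (negPf tvar_neq0) andbF orbF.
Qed.

Lemma fracE (x : QT) : x = tofrac \n_(repr x) / tofrac \d_(repr x).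
Proof.
rewrite -[x in LHS]reprK; set r := repr x.
have tofrac_pi (a : {poly rat}) : tofrac a = \pi_QT (Ratio a 1) by unlock tofrac.
rewrite !tofrac_pi; change (\pi_QT r = FracField.mul (\pi_QT (Ratio \n_r 1))
                                  (FracField.inv (\pi_QT (Ratio \d_r 1)))).
rewrite -FracField.pi_inv -FracField.pi_mul /FracField.invf /FracField.mulf /=.
by rewrite !numden_Ratio ?oner_neq0 ?denom_ratioP // mulr1 mul1r Ratio_numden.
Qed.

Lemma bar_frac (n d : {poly rat}) :
  d != 0 -> bar (tofrac n / tofrac d) = subst_inv n / subst_inv d.
Proof.
move=> d0; rewrite /bar; set r := repr _.
have r0 : \d_r != 0 := denom_ratioP r.
have /eqP : tofrac n / tofrac d = tofrac \n_r / tofrac \d_r by rewrite -fracE.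
rewrite eqr_div ?tofrac_eq0 // -!tofracM tofrac_eq => /eqP /(congr1 subst_inv).
rewrite !rmorphM => cross; apply/eqP.
by rewrite eqr_div ?subst_inv_eq0 // cross.
Qed.

Lemma fracP (x : QT) :
  exists n d, d != 0 /\ x = tofrac n / tofrac d.
Proof. by exists \n_(repr x), \d_(repr x); rewrite -fracE denom_ratioP. Qed.

Lemma bar_is_zmod_morphism : zmod_morphism bar.
Proof.
move=> x y; have [n1 [d1 [d10 ->]]] := fracP x; have [n2 [d2 [d20 ->]]] := fracP y.
rewrite -mulNr -tofracN addf_div ?tofrac_eq0 // -!tofracM -tofracD.
rewrite !bar_frac ?mulf_neq0 // rmorphD !rmorphM rmorphN.
by rewrite -mulNr addf_div ?subst_inv_eq0.
Qed.

Lemma bar_is_monoid_morphism : monoid_morphism bar.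
Proof.
split=> [|x y]; first by rewrite -[1]divr1 -tofrac1 bar_frac ?oner_eq0 // rmorph1 divr1.
have [n1 [d1 [d10 ->]]] := fracP x; have [n2 [d2 [d20 ->]]] := fracP y.
by rewrite mulf_div -!tofracM !bar_frac ?mulf_neq0 // !rmorphM mulf_div.
Qed.

HB.instance Definition _ := GRing.isZmodMorphism.Build QT QT bar bar_is_zmod_morphism.
HB.instance Definition _ := GRing.isMonoidMorphism.Build QT QT bar bar_is_monoid_morphism.

Lemma bar_tofrac (p : {poly rat}) : bar (tofrac p) = subst_inv p.
Proof. by rewrite -[tofrac p]divr1 -tofrac1 bar_frac ?oner_eq0 // rmorph1 divr1. Qed.

Lemma bar_ratQT c : bar (ratQT c) = ratQT c.
Proof. by rewrite bar_tofrac subst_invC. Qed.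

Lemma bar_tvar : bar tvar = tvar^-1.
Proof. by rewrite bar_tofrac subst_invX. Qed.

Lemma bar_subst_inv (p : {poly rat}) : bar (subst_inv p) = tofrac p.
Proof.
elim/poly_ind: p => [|p c IHp]; first by rewrite !rmorph0.
rewrite !rmorphD !rmorphM /= IHp subst_invX fmorphV /= bar_tvar invrK.
by rewrite subst_invC bar_ratQT.
Qed.

Lemma barK : involutive bar.
Proof.
move=> x; have [n [d [d0 ->]]] := fracP x.
by rewrite bar_frac // fmorph_div /= !bar_subst_inv.
Qed.

Lemma bar_Phi : bar Phi = Phi.
Proof. by rewrite !rmorphD rmorph1 fmorphV /= bar_tvar invrK addrAC. Qed.

Lemma tvar_unit : tvar \is a GRing.unit.
Proof. by rewrite unitfE tvar_neq0. Qed.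

Lemma expz_tvar_eq1 (k : int) : tvar ^ k = 1 -> k = 0.
Proof.
have tvarXn_eq1 n : tvar ^+ n = 1 -> n = 0%N.
  rewrite -tofracXn -tofrac1 => /eqP; rewrite tofrac_eq => /eqP Xn1.
  by have := size_polyXn rat n; rewrite Xn1 size_poly1 => -[].
case: k => n /= => [/tvarXn_eq1 -> // | /(congr1 GRing.inv)].
by rewrite invrK invr1 => /tvarXn_eq1.
Qed.

Definition monoQT (c : rat) (k : int) : QT := ratQT c * tvar ^ k.

Lemma monoQTM c c' k k' : monoQT c k * monoQT c' k' = monoQT (c * c') (k + k').
Proof. by rewrite /monoQT rmorphM exprzDr ?tvar_unit // mulrACA. Qed.

Lemma bar_monoQT c k : bar (monoQT c k) = monoQT c (- k).
Proof. by rewrite rmorphM /= fmorphXz /= bar_ratQT bar_tvar exprz_inv. Qed.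

Lemma monoQT_inj c c' k k' :
  c != 0 -> monoQT c k = monoQT c' k' -> c = c' /\ k = k'.
Proof.
move=> c0 eq_mono; set d := k - k'.
have shift : monoQT c d = ratQT c'.
  by rewrite -[c]mulr1 -monoQTM eq_mono monoQTM mulr1 subrr /monoQT expr0z mulr1.
have d0 : d = 0.
  have c0' : ratQT c != 0 by rewrite fmorph_eq0.
  have := congr1 bar shift; rewrite bar_monoQT bar_ratQT -shift.
  move=> /(mulfI c0') dN; have {dN} /expz_tvar_eq1 : tvar ^ (d + d) = 1.
    by rewrite exprzDr ?tvar_unit // -{1}dN -exprzDr ?tvar_unit // addNr expr0z.
  lia.
split; last by move: d0; rewrite /d; lia.
by move: shift; rewrite d0 /monoQT expr0z mulr1 => /fmorph_inj.
Qed.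

Lemma bar_fixed_monoQT c k : c != 0 -> bar (monoQT c k) = monoQT c k -> k = 0.
Proof. by move=> c0; rewrite bar_monoQT => /(monoQT_inj c0) [_]; lia. Qed.

Lemma det_mx2 (R : comNzRingType) (A : 'M[R]_2) :
  \det A = A 0 0 * A 1 1 - A 0 1 * A 1 0.
Proof.
rewrite (expand_det_row _ 0) !big_ord_recl big_ord0 addr0 /cofactor !det_mx11 !mxE /=.
rewrite expr0 expr1 !mul1r mulN1r mulrN.
by congr (A _ _ * A _ _ - A _ _ * A _ _); apply: val_inj.
Qed.

Definition quat_norm (g1 g2 : QT) : QT := g1 * bar g1 + Phi * (g2 * bar g2).

Lemma det_quat_mx g1 g2 : \det (quat_mx g1 g2) = quat_norm g1 g2.
Proof. rewrite det_mx2 !mxE /= /quat_norm; ring. Qed.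

Lemma bar_mul_bar x : bar (x * bar x) = x * bar x.
Proof. by rewrite rmorphM /= barK mulrC. Qed.

Lemma bar_quat_norm g1 g2 : bar (quat_norm g1 g2) = quat_norm g1 g2.
Proof. by rewrite rmorphD /= [bar (Phi * _)]rmorphM /= bar_Phi !bar_mul_bar. Qed.

Lemma laurent_mul_bar (p : {poly rat}) k :
  tofrac p / tvar ^+ k * bar (tofrac p / tvar ^+ k) = tofrac p * subst_inv p.
Proof.
rewrite fmorph_div rmorphXn /= bar_tofrac bar_tvar exprVn invrK.
by rewrite mulrACA mulVf ?mulr1 // expf_neq0 ?tvar_neq0.
Qed.

Lemma quat_norm_ge0 g1 g2 c :
  laurentQ g1 -> laurentQ g2 -> quat_norm g1 g2 = ratQT c -> 0 <= c.
Proof.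
move=> [p1 [k1 ->]] [p2 [k2 ->]]; rewrite /quat_norm !laurent_mul_bar => norm_c.
set m := maxn (size p1) (size p2).
have le_p1 : (size p1 <= m.+1)%N by rewrite /m; lia.
have le_p2 : (size p2 <= m.+1)%N by rewrite /m; lia.
have Phi_tvar : Phi * tvar = tofrac (1 + 'X + 'X^2).
  rewrite /Phi !rmorphD rmorph1 rmorphXn /= -/tvar !mulrDl mulVf ?tvar_neq0 //; ring.
have : c%:P * 'X^(m.+1) = 'X * (p1 * revp m p1) + (1 + 'X + 'X^2) * (p2 * revp m p2).
  apply/eqP; rewrite -tofrac_eq; apply/eqP.
  rewrite !rmorphD !rmorphM /= -!subst_inv_revp // -Phi_tvar.
  rewrite rmorphXn /= -/tvar -[tofrac c%:P]/(ratQT c) -norm_c exprS; ring.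
move=> /(congr1 (horner^~ 1)); rewrite hornerCM hornerXn expr1n mulr1 => ->.
rewrite !(hornerD, hornerM, hornerX, hornerXn, hornerC) !horner_revp ?oner_neq0 //.
rewrite invr1 !expr1n !mul1r.
by rewrite -!expr2 addr_ge0 ?sqr_ge0 // mulr_ge0 ?sqr_ge0.
Qed.

Theorem corollary4p10 :
  forall A : 'M[QT]_2, GL2Q A -> (in_U A <-> in_U1 A).
Proof.
move=> A [_ [e [l [e0 detA]]]]; split => [UA | []//]; split=> //.
case: UA => [[_ [g1 [g2 [[a [i [a0 ->]]] Lg1 Lg2 quatA]]]]].
move=> [_ [[b [j [b0 ->]]] [_ [neg [n det_bA]]]]].
have det_scaled c k : \det (monoQT c k *: A) = monoQT (c ^+ 2 * e) (k + k + l).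
  by rewrite detZ detA exprS expr1 !monoQTM.
have norm_aA : quat_norm g1 g2 = monoQT (a ^+ 2 * e) (i + i + l).
  by rewrite -det_quat_mx -quatA det_scaled.
have il0 : i + i + l = 0.
  apply: (bar_fixed_monoQT (c := a ^+ 2 * e)); first by rewrite mulf_neq0 ?expf_neq0.
  by rewrite -norm_aA bar_quat_norm.
have e_gt0 : 0 < e.
  have : 0 <= a ^+ 2 * e.
    by apply: (quat_norm_ge0 Lg1 Lg2); rewrite norm_aA il0 /monoQT expr0z mulr1.
  by rewrite pmulr_rge0 ?exprn_even_gt0 // le0r (negPf e0).
have [be_sign _] : b ^+ 2 * e = (-1) ^+ neg /\ j + j + l = n.
  apply: monoQT_inj; first by rewrite mulf_neq0 ?expf_neq0.
  by rewrite -det_scaled det_bA /monoQT rmorph_sign.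
have be1 : b ^+ 2 * e = 1.
  have : 0 < b ^+ 2 * e by rewrite mulr_gt0 ?exprn_even_gt0.
  by case: neg {det_bA} be_sign => // ->; rewrite expr1 oppr_gt0 ltr10.
exists (monoQT b i); split; first by exists b, i.
by rewrite det_scaled il0 be1 /monoQT rmorph1 expr0z mulr1.
Qed.
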